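(* Let $0\le a<b<1$ and let $\varrho\ge0$ be a function on $[a,b]$ such that $\varrho/\zeta$ is non-decreasing and bounded on $[a,b]$. Then (i) $$\big(b\zeta(b)-a\zeta(a)\big)\,\hat m(\varrho/\zeta,a,b)\le 2+a\widetilde\varrho(a+)+b\widetilde\varrho(b-),$$ and (ii) equality holds in (i) if and only if $\varrho\equiv0$ on $[a,b)$.
   Context: $\zeta(t)=\frac{2}{1-t^2}$, $\hat\varrho(t)=t\zeta(t)$ (so $\hat\varrho=\zeta'/\zeta$), and $\widetilde\varrho=\hat\varrho+\varrho$; $\widetilde\varrho(a+)=a\zeta(a)+\lim_{t\downarrow a}\varrho(t)$ and $\widetilde\varrho(b-)=b\zeta(b)+\lim_{t\uparrow b}\varrho(t)$. With $h$ a primitive of $\varrho$, $\psi=e^h$, $\mathtt f(x)=x\zeta(x)^2\psi(x)$, $\mathtt g(x)=x\zeta(x)\psi(x)$, define $\hat m(\varrho/\zeta,a,b):=\frac{\mathtt g(a)+\mathtt g(b)}{\int_a^b\mathtt f\,dt}$. *)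

From Stdlib Require Import Reals Lra ClassicalEpsilon.
Open Scope R_scope.

Definition zeta (t : R) : R := 2 / (1 - t ^ 2).

(* hat rho (t) = t zeta(t)  (= zeta'/zeta) *)
Definition rho_hat (t : R) : R := t * zeta t.

(* Total Riemann integral: the value of the Riemann integral of f over [a,b]
   when f is Riemann integrable there (chosen by classical epsilon; the value
   does not depend on the integrability proof). *)
Definition RInt (f : R -> R) (a b : R) : R :=
  epsilon (inhabits 0)
    (fun I => exists pr : Riemann_integrable f a b, RiemannInt pr = I).

Definition h_fun (rho : R -> R) (a x : R) : R := RInt rho a x.
Definition psi (rho : R -> R) (a x : R) : R := exp (h_fun rho a x).

Definition f_fun (rho : R -> R) (a x : R) : R := x * (zeta x) ^ 2 * psi rho a x.
Definition g_fun (rho : R -> R) (a x : R) : R := x * zeta x * psi rho a x.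

(* hat m(rho/zeta, a, b) = (g(a)+g(b)) / int_a^b f *)
Definition m_hat (rho : R -> R) (a b : R) : R :=
  (g_fun rho a a + g_fun rho a b) / RInt (f_fun rho a) a b.

Definition right_lim (f : R -> R) (x l : R) : Prop :=
  forall eps, 0 < eps -> exists delta, 0 < delta /\
    forall t, x < t < x + delta -> Rabs (f t - l) < eps.
Definition left_lim (f : R -> R) (x l : R) : Prop :=
  forall eps, 0 < eps -> exists delta, 0 < delta /\
    forall t, x - delta < t < x -> Rabs (f t - l) < eps.

(* Let C = c0 + a La + b Lb, where c0 = zeta a + zeta b - 2 = 2 + a rho_hat a + b rho_hat b,
   and let weight x = c0 (zeta x - zeta a) - kappa a zeta a with kappa = b zeta b - a zeta a.
   Since zeta' = x zeta^2 and psi' = rho psi, the function Phi = C int_a^x f - weight psi has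
   formal derivative (a La + b Lb) f - weight rho psi.  Monotonicity of rho / zeta gives
   rho <= Lb zeta / zeta b, and b zeta b x zeta x - weight x >= 0 on [a,b] because, multiplied
   by 1 - x^2, it is a concave quadratic that is nonnegative at both ends; hence Phi is
   nondecreasing.  As weight a = -kappa a zeta a and weight b = kappa b zeta b,
   Phi b - Phi a = C int_a^b f - kappa (g a + g b), which is (i).
   Since psi is merely Lipschitz, the derivative is replaced by a bound on increments up to a
   quadratic error, which disappears when the increments are telescoped over finer and finer
   subdivisions.  If rho does not vanish on [a,b), then Lb > 0, the slope is bounded below on
   the middle third of [a,b] and (i) is strict; if it vanishes, La = Lb = 0, psi = 1 and
   int_a^b f = zeta b - zeta a, and equality is a direct computation. *)

From Pilot Require Import Defs.
From Stdlib Require Import Reals Lra Psatz ClassicalEpsilon RList.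
From Coquelicot Require Coquelicot.
Open Scope R_scope.

(** * Riemann integrability of nondecreasing functions *)

Definition nondecreasing_on (f : R -> R) (a b : R) : Prop :=
  forall x y, a <= x -> x <= y -> y <= b -> f x <= f y.

Lemma nondecreasing_on_sub f a b x y :
  nondecreasing_on f a b -> a <= x -> y <= b -> nondecreasing_on f x y.
Proof. intros Hf Hx Hy u v Hu Huv Hv. apply Hf; lra. Qed.

Lemma IsStepFun_ext (f g : R -> R) (a b : R) :
  IsStepFun f a b -> (forall x, Rmin a b < x < Rmax a b -> f x = g x) ->
  IsStepFun g a b.
Proof.
  intros [l [lf [Hsorted [Hfirst [Hlast [Hlen Hconst]]]]]] Hfg.
  exists l, lf. repeat split; try assumption.
  intros i Hi x Hx. rewrite <- Hfg.
  - exact (Hconst i Hi x Hx).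
  - destruct Hx as [Hx1 Hx2]. split.
    + apply Rle_lt_trans with (pos_Rl l i); [|exact Hx1].
      rewrite <- Hfirst. apply RList_P5; [exact Hsorted|].
      apply RList_P3. exists i; split; [reflexivity | lia].
    + apply Rlt_le_trans with (pos_Rl l (S i)); [exact Hx2|].
      rewrite <- Hlast. apply RList_P7; [exact Hsorted|].
      apply RList_P3. exists (S i); split; [reflexivity | lia].
Qed.

Lemma RiemannInt_SF_ext (a b : R) (phi psi : StepFun a b) :
  a <= b -> (forall x, a < x < b -> phi x = psi x) ->
  RiemannInt_SF phi = RiemannInt_SF psi.
Proof.
  intros Hab H. apply Rle_antisym; apply StepFun_P37; try exact Hab;
    intros x Hx; rewrite H by exact Hx; lra.
Qed.

(* [Riemann_integrable f a b] is [step_approx f a b e] for every [e > 0]. *)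
Definition step_approx (f : R -> R) (a b e : R) : Type :=
  {phi : StepFun a b & {psi : StepFun a b |
    (forall t, a <= t <= b -> Rabs (f t - phi t) <= psi t) /\ RiemannInt_SF psi <= e}}.

Lemma step_approx_nondecreasing f a b :
  a <= b -> nondecreasing_on f a b -> step_approx f a b ((b - a) * (f b - f a)).
Proof.
  intros Hab Hf.
  exists (mkStepFun (StepFun_P4 a b (f a))), (mkStepFun (StepFun_P4 a b (f b - f a))).
  split.
  - intros t Ht. simpl. unfold fct_cte.
    assert (f a <= f t) by (apply Hf; lra).
    assert (f t <= f b) by (apply Hf; lra).
    rewrite Rabs_right; lra.
  - rewrite StepFun_P18. lra.
Qed.

Definition glue (u v : R -> R) (c t : R) : R := if Rle_dec t c then u t else v t.

Lemma IsStepFun_glue_l u v a c : a <= c -> IsStepFun u a c -> IsStepFun (glue u v c) a c.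
Proof.
  intros Hac Hu. apply (IsStepFun_ext u); [exact Hu|].
  intros x Hx. rewrite Rmin_left, Rmax_right in Hx by lra.
  unfold glue. destruct (Rle_dec x c); [reflexivity | lra].
Qed.

Lemma IsStepFun_glue_r u v c b : c <= b -> IsStepFun v c b -> IsStepFun (glue u v c) c b.
Proof.
  intros Hcb Hv. apply (IsStepFun_ext v); [exact Hv|].
  intros x Hx. rewrite Rmin_left, Rmax_right in Hx by lra.
  unfold glue. destruct (Rle_dec x c); [lra | reflexivity].
Qed.

Lemma step_approx_glue f a c b e1 e2 : a <= c -> c <= b ->
  step_approx f a c e1 -> step_approx f c b e2 -> step_approx f a b (e1 + e2).
Proof.
  intros Hac Hcb [phi1 [psi1 [Hphi1 Hpsi1]]] [phi2 [psi2 [Hphi2 Hpsi2]]].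
  pose (Psi1 := mkStepFun (IsStepFun_glue_l psi1 psi2 a c Hac (pre psi1))).
  pose (Psi2 := mkStepFun (IsStepFun_glue_r psi1 psi2 c b Hcb (pre psi2))).
  exists (mkStepFun (StepFun_P46 (IsStepFun_glue_l phi1 phi2 a c Hac (pre phi1))
                                  (IsStepFun_glue_r phi1 phi2 c b Hcb (pre phi2)))).
  exists (mkStepFun (StepFun_P46 (pre Psi1) (pre Psi2))).
  split.
  - intros t Ht. simpl. unfold glue.
    destruct (Rle_dec t c); [apply Hphi1 | apply Hphi2]; lra.
  - pose proof (StepFun_P43 (pre Psi1) (pre Psi2) (StepFun_P46 (pre Psi1) (pre Psi2))) as Hsum.
    change (RiemannInt_SF Psi1 + RiemannInt_SF Psi2
      = RiemannInt_SF (mkStepFun (StepFun_P46 (pre Psi1) (pre Psi2)))) in Hsum.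
    rewrite <- Hsum, (RiemannInt_SF_ext a c Psi1 psi1 Hac), (RiemannInt_SF_ext c b Psi2 psi2 Hcb).
    + lra.
    + intros x Hx. simpl. unfold glue. destruct (Rle_dec x c); [lra | reflexivity].
    + intros x Hx. simpl. unfold glue. destruct (Rle_dec x c); [reflexivity | lra].
Qed.

(* Cells of width [del], starting from the right end: the errors telescope. *)
Lemma step_approx_mesh f a b del : 0 < del -> nondecreasing_on f a b ->
  forall n a', a <= a' <= b -> b - a' <= INR n * del ->
  step_approx f a' b (del * (f b - f a')).
Proof.
  intros Hdel Hf n. induction n as [|n IH]; intros a' Ha' Hn.
  - simpl in Hn. replace a' with b by lra.
    replace (del * (f b - f b)) with ((b - b) * (f b - f b)) by ring.
    apply step_approx_nondecreasing; [lra|].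
    exact (nondecreasing_on_sub f a b b b Hf ltac:(lra) ltac:(lra)).
  - assert (Hfa' : f a' <= f b) by (apply Hf; lra).
    destruct (Rle_dec (b - a') del) as [Hs | Hs].
    + pose proof (step_approx_nondecreasing f a' b ltac:(lra)
        (nondecreasing_on_sub f a b a' b Hf ltac:(lra) ltac:(lra))) as [phi [psi [H1 H2]]].
      exists phi, psi. split; [exact H1 | nra].
    + replace (del * (f b - f a'))
        with ((a' + del - a') * (f (a' + del) - f a') + del * (f b - f (a' + del))) by ring.
      apply step_approx_glue with (a' + del); try lra.
      * apply step_approx_nondecreasing; [lra|].
        apply (nondecreasing_on_sub f a b); [exact Hf | lra | lra].
      * apply IH; [lra|]. rewrite S_INR in Hn. lra.
Qed.

Lemma Riemann_integrable_nondecreasing f a b :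
  a <= b -> nondecreasing_on f a b -> Riemann_integrable f a b.
Proof.
  intros Hab Hf eps.
  assert (Hfab : f a <= f b) by (apply Hf; lra).
  pose proof (cond_pos eps) as Heps.
  set (del := eps / (2 * (f b - f a + 1))).
  assert (Hdel : 0 < del) by (apply Rdiv_lt_0_compat; lra).
  destruct (constructive_indefinite_description _ (INR_unbounded ((b - a) / del))) as [n Hn].
  assert (Hbn : b - a <= INR n * del).
  { apply Rlt_le. apply Rmult_lt_reg_r with (/ del); [apply Rinv_0_lt_compat; lra|].
    rewrite Rmult_assoc, Rinv_r, Rmult_1_r by lra. exact Hn. }
  destruct (step_approx_mesh f a b del Hdel Hf n a ltac:(lra) Hbn) as [phi [psi [H1 H2]]].
  exists phi, psi. rewrite Rmin_left, Rmax_right by lra. split; [exact H1|].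
  assert (0 <= RiemannInt_SF psi).
  { rewrite <- (Rmult_0_l (b - a)), <- (StepFun_P18 a b 0).
    apply StepFun_P37; [exact Hab|]. intros x Hx. simpl. unfold fct_cte.
    apply Rle_trans with (Rabs (f x - phi x)); [apply Rabs_pos | apply H1; lra]. }
  rewrite Rabs_right by lra.
  apply Rle_lt_trans with (del * (f b - f a)); [exact H2|].
  unfold del. apply Rmult_lt_reg_r with (2 * (f b - f a + 1)); [lra|].
  replace (eps / (2 * (f b - f a + 1)) * (f b - f a) * (2 * (f b - f a + 1)))
    with (eps * (f b - f a)) by (field; lra).
  nra.
Qed.

Lemma RInt_RiemannInt f a b (pr : Riemann_integrable f a b) : RInt f a b = RiemannInt pr.
Proof.
  unfold RInt.
  destruct (epsilon_spec (inhabits 0) (fun I => exists pr, RiemannInt pr = I)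
     (ex_intro _ (RiemannInt pr) (ex_intro _ pr eq_refl))) as [pr' <-].
  apply RiemannInt_P5.
Qed.

Lemma RInt_diag f a : RInt f a a = 0.
Proof. rewrite (RInt_RiemannInt f a a (RiemannInt_P7 f a)). apply RiemannInt_P9. Qed.

Lemma RInt_le_const f x y c : x <= y -> Riemann_integrable f x y ->
  (forall t, x < t < y -> f t <= c) -> RInt f x y <= c * (y - x).
Proof.
  intros Hxy pr H. rewrite (RInt_RiemannInt f x y pr).
  rewrite <- (RiemannInt_P15 (RiemannInt_P14 x y c)).
  apply RiemannInt_P19; [exact Hxy | exact H].
Qed.

Lemma RInt_ge_const f x y c : x <= y -> Riemann_integrable f x y ->
  (forall t, x < t < y -> c <= f t) -> c * (y - x) <= RInt f x y.
Proof.
  intros Hxy pr H. rewrite (RInt_RiemannInt f x y pr).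
  rewrite <- (RiemannInt_P15 (RiemannInt_P14 x y c)).
  apply RiemannInt_P19; [exact Hxy | exact H].
Qed.

Section NondecreasingIntegrand.

Variables (f : R -> R) (a b : R).
Hypothesis f_nondecr : nondecreasing_on f a b.

Lemma Riemann_integrable_nondecreasing_sub x y :
  a <= x -> x <= y -> y <= b -> Riemann_integrable f x y.
Proof.
  intros Hx Hxy Hy. apply Riemann_integrable_nondecreasing; [exact Hxy|].
  exact (nondecreasing_on_sub f a b x y f_nondecr Hx Hy).
Qed.

Lemma RInt_Chasles_nondecreasing x y : a <= x -> x <= y -> y <= b ->
  RInt f a y = RInt f a x + RInt f x y.
Proof.
  intros Hx Hxy Hy.
  rewrite
    (RInt_RiemannInt f a y (Riemann_integrable_nondecreasing_sub a y ltac:(lra) ltac:(lra) Hy)),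
    (RInt_RiemannInt f a x (Riemann_integrable_nondecreasing_sub a x ltac:(lra) Hx ltac:(lra))),
    (RInt_RiemannInt f x y (Riemann_integrable_nondecreasing_sub x y Hx Hxy Hy)).
  symmetry. apply RiemannInt_P26.
Qed.

Lemma RInt_ge_left_value x y : a <= x -> x <= y -> y <= b -> f x * (y - x) <= RInt f x y.
Proof.
  intros Hx Hxy Hy. apply RInt_ge_const; [exact Hxy | |].
  - exact (Riemann_integrable_nondecreasing_sub x y Hx Hxy Hy).
  - intros t Ht. apply f_nondecr; lra.
Qed.

End NondecreasingIntegrand.

(** * One-sided limits *)

Lemma right_lim_le f g x lf lg r : 0 < r ->
  (forall t, x < t < x + r -> f t <= g t) ->
  right_lim f x lf -> right_lim g x lg -> lf <= lg.
Proof.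
  intros Hr Hfg Hf Hg. apply Rnot_lt_le. intros Hlt.
  destruct (Hf ((lf - lg) / 2) ltac:(lra)) as [df [Hdf Hf']].
  destruct (Hg ((lf - lg) / 2) ltac:(lra)) as [dg [Hdg Hg']].
  set (t := x + Rmin r (Rmin df dg) / 2).
  assert (0 < Rmin r (Rmin df dg)) by (repeat apply Rmin_pos; lra).
  pose proof (Rmin_l r (Rmin df dg)). pose proof (Rmin_r r (Rmin df dg)).
  pose proof (Rmin_l df dg). pose proof (Rmin_r df dg).
  specialize (Hf' t ltac:(unfold t; lra)). specialize (Hg' t ltac:(unfold t; lra)).
  specialize (Hfg t ltac:(unfold t; lra)).
  apply Rabs_def2 in Hf'. apply Rabs_def2 in Hg'. lra.
Qed.

Lemma left_lim_le f g x lf lg r : 0 < r ->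
  (forall t, x - r < t < x -> f t <= g t) ->
  left_lim f x lf -> left_lim g x lg -> lf <= lg.
Proof.
  intros Hr Hfg Hf Hg. apply Rnot_lt_le. intros Hlt.
  destruct (Hf ((lf - lg) / 2) ltac:(lra)) as [df [Hdf Hf']].
  destruct (Hg ((lf - lg) / 2) ltac:(lra)) as [dg [Hdg Hg']].
  set (t := x - Rmin r (Rmin df dg) / 2).
  assert (0 < Rmin r (Rmin df dg)) by (repeat apply Rmin_pos; lra).
  pose proof (Rmin_l r (Rmin df dg)). pose proof (Rmin_r r (Rmin df dg)).
  pose proof (Rmin_l df dg). pose proof (Rmin_r df dg).
  specialize (Hf' t ltac:(unfold t; lra)). specialize (Hg' t ltac:(unfold t; lra)).
  specialize (Hfg t ltac:(unfold t; lra)).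
  apply Rabs_def2 in Hf'. apply Rabs_def2 in Hg'. lra.
Qed.

Lemma right_lim_continuous f x : continuity_pt f x -> right_lim f x (f x).
Proof.
  intros Hf eps Heps.
  destruct (Hf eps Heps) as [del [Hdel H]].
  exists del. split; [exact Hdel|]. intros t Ht.
  apply (H t). split.
  - split; [exact I | lra].
  - simpl. unfold R_dist. rewrite Rabs_right; lra.
Qed.

Lemma left_lim_continuous f x : continuity_pt f x -> left_lim f x (f x).
Proof.
  intros Hf eps Heps.
  destruct (Hf eps Heps) as [del [Hdel H]].
  exists del. split; [exact Hdel|]. intros t Ht.
  apply (H t). split.
  - split; [exact I | lra].
  - simpl. unfold R_dist. rewrite Rabs_left; lra.
Qed.

(** * Increments with a lower slope up to a quadratic error *)

Section LocalSlope.

Variables (G : R -> R) (a b k L : R).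
Hypothesis local_bound : forall x y, a <= x -> x <= y -> y <= b ->
  k * (y - x) - L * (y - x) ^ 2 <= G y - G x.

Lemma increment_ge_uniform_steps (del : R) (m : nat) :
  0 <= del -> a <= b -> a + INR m * del <= b ->
  k * (INR m * del) - Rabs L * INR m * del ^ 2 <= G (a + INR m * del) - G a.
Proof.
  intros Hdel Hab. induction m as [|m IH]; intros Hm.
  - simpl. rewrite Rmult_0_l, Rplus_0_r. lra.
  - rewrite S_INR in *. pose proof (pos_INR m).
    specialize (IH ltac:(nra)).
    specialize (local_bound (a + INR m * del) (a + (INR m + 1) * del) ltac:(nra) ltac:(nra) Hm).
    replace (a + (INR m + 1) * del - (a + INR m * del)) with del in local_bound by ring.
    pose proof (Rle_abs L). assert (0 <= del ^ 2) by nra.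
    nra.
Qed.

Lemma increment_ge_of_local_bound : a <= b -> k * (b - a) <= G b - G a.
Proof.
  intros Hab. apply Rnot_lt_le. intros Hlt.
  set (gap := k * (b - a) - (G b - G a)).
  pose proof (Rabs_pos L).
  destruct (INR_unbounded (Rabs L * (b - a) ^ 2 / gap)) as [n Hn].
  assert (Hn0 : 0 < INR n).
  { apply Rle_lt_trans with (Rabs L * (b - a) ^ 2 / gap); [|exact Hn].
    apply Rmult_le_pos; [apply Rmult_le_pos; [lra | apply pow2_ge_0] |].
    left. apply Rinv_0_lt_compat. unfold gap. lra. }
  set (del := (b - a) / INR n).
  assert (Hdel : 0 <= del) by (apply Rmult_le_pos; [lra | left; apply Rinv_0_lt_compat; lra]).
  assert (Hstep : INR n * del = b - a) by (unfold del; field; lra).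
  pose proof (increment_ge_uniform_steps del n Hdel Hab ltac:(lra)) as Hsum.
  rewrite Hstep, Rplus_minus in Hsum.
  assert (Rabs L * (b - a) ^ 2 < gap * INR n).
  { apply Rmult_lt_reg_r with (/ gap); [apply Rinv_0_lt_compat; unfold gap; lra|].
    replace (gap * INR n * / gap) with (INR n) by (field; unfold gap; lra). exact Hn. }
  replace (Rabs L * INR n * del ^ 2) with (Rabs L * (b - a) ^ 2 / INR n) in Hsum
    by (unfold del; field; lra).
  assert (Rabs L * (b - a) ^ 2 / INR n < gap).
  { apply Rmult_lt_reg_r with (INR n); [lra|].
    unfold Rdiv. rewrite Rmult_assoc, Rinv_l by lra. lra. }
  unfold gap in *. lra.
Qed.

End LocalSlope.

(** * The function zeta *)

Lemma zeta_mul_one_sub_sq t : -1 < t < 1 -> zeta t * (1 - t ^ 2) = 2.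
Proof. intros Ht. unfold zeta. field. nra. Qed.

Lemma two_le_zeta t : -1 < t < 1 -> 2 <= zeta t.
Proof.
  intros Ht. pose proof (zeta_mul_one_sub_sq t Ht).
  assert (0 < 1 - t ^ 2 <= 1) by nra. nra.
Qed.

Lemma div_zeta_nonneg r t : -1 < t < 1 -> 0 <= r -> 0 <= r / zeta t.
Proof.
  intros Ht Hr. pose proof (two_le_zeta t Ht).
  apply Rmult_le_pos; [exact Hr | left; apply Rinv_0_lt_compat; lra].
Qed.

Lemma zeta_sub x y : -1 < x < 1 -> -1 < y < 1 ->
  zeta y - zeta x = (y - x) * (x + y) * zeta x * zeta y / 2.
Proof. intros. unfold zeta. field. split; nra. Qed.

Lemma zeta_le x y : 0 <= x -> x <= y -> y < 1 -> zeta x <= zeta y.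
Proof.
  intros Hx Hxy Hy. pose proof (zeta_sub x y ltac:(lra) ltac:(lra)).
  pose proof (two_le_zeta x ltac:(lra)). pose proof (two_le_zeta y ltac:(lra)).
  assert (0 <= (y - x) * (x + y) * zeta x * zeta y / 2).
  { unfold Rdiv. apply Rmult_le_pos; [|lra].
    apply Rmult_le_pos; [apply Rmult_le_pos; [apply Rmult_le_pos|]|]; lra. }
  lra.
Qed.

Lemma continuity_pt_zeta t : -1 < t < 1 -> continuity_pt zeta t.
Proof. intros Ht. unfold zeta. reg. nra. Qed.

Section ZetaOnInterval.

Variables (x y b : R).
Hypotheses (Hx : 0 <= x) (Hxy : x <= y) (Hyb : y <= b) (Hb : b < 1).

Lemma zeta_sub_le_lipschitz : zeta y - zeta x <= zeta b ^ 2 * (y - x).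
Proof.
  rewrite zeta_sub by lra.
  pose proof (two_le_zeta x ltac:(lra)). pose proof (two_le_zeta y ltac:(lra)).
  pose proof (zeta_le x b Hx ltac:(lra) Hb). pose proof (zeta_le y b ltac:(lra) Hyb Hb).
  assert (zeta x * zeta y <= zeta b ^ 2) by nra.
  assert (0 <= (y - x) * ((x + y) / 2) <= y - x) by nra.
  nra.
Qed.

(* Second-order Taylor bound at [x], using [zeta' t = t zeta t ^ 2]. *)
Lemma zeta_sub_le_tangent :
  zeta y - zeta x <= x * zeta x ^ 2 * (y - x) + zeta b ^ 3 * (y - x) ^ 2.
Proof.
  assert (E : zeta y - zeta x - x * zeta x ^ 2 * (y - x)
            = (y - x) ^ 2 * (1 + x ^ 2 + 2 * x * y) * zeta x ^ 2 * zeta y / 4)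
    by (unfold zeta; field; split; nra).
  pose proof (two_le_zeta x ltac:(lra)). pose proof (two_le_zeta y ltac:(lra)).
  pose proof (zeta_le x b Hx ltac:(lra) Hb). pose proof (zeta_le y b ltac:(lra) Hyb Hb).
  assert (zeta x ^ 2 * zeta y <= zeta b ^ 3).
  { replace (zeta b ^ 3) with (zeta b ^ 2 * zeta b) by ring.
    apply Rmult_le_compat; nra. }
  assert (0 <= 1 + x ^ 2 + 2 * x * y <= 4) by nra.
  assert (0 <= zeta x ^ 2 * zeta y) by nra.
  assert ((1 + x ^ 2 + 2 * x * y) * (zeta x ^ 2 * zeta y) <= 4 * zeta b ^ 3)
    by (apply Rmult_le_compat; lra).
  assert (0 <= (y - x) ^ 2) by nra.
  nra.
Qed.

End ZetaOnInterval.

(* Coquelicot is imported locally since its [RInt] would shadow the one of Defs. *)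
Module ZetaPrimitive.
Import Coquelicot.Coquelicot.

Lemma RiemannInt_zeta_derivative (F : R -> R) a b (pr : Riemann_integrable F a b) :
  -1 < a -> a <= b -> b < 1 ->
  (forall x, a < x < b -> F x = x * zeta x ^ 2) ->
  RiemannInt pr = zeta b - zeta a.
Proof.
  intros Ha Hab Hb HF.
  assert (Hderiv : is_RInt (fun x => x * zeta x ^ 2) a b (minus (zeta b) (zeta a))).
  { apply (is_RInt_derive zeta); intros x Hx; rewrite Rmin_left, Rmax_right in Hx by lra.
    - unfold zeta. auto_derive; [nra | field; nra].
    - apply (ex_derive_continuous (K := R_AbsRing) (V := R_NormedModule)).
      unfold zeta. auto_derive. nra. }
  rewrite <- (is_RInt_unique F a b _ (ex_RInt_Reals_aux_1 F a b pr)).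
  apply is_RInt_unique. apply is_RInt_ext with (fun x => x * zeta x ^ 2); [|exact Hderiv].
  intros x Hx. rewrite Rmin_left, Rmax_right in Hx by lra. symmetry. apply HF, Hx.
Qed.

End ZetaPrimitive.

(** * The weight *)

Definition c0 (a b : R) : R := zeta a + zeta b - 2.
Definition kappa (a b : R) : R := b * zeta b - a * zeta a.
Definition weight (a b x : R) : R := c0 a b * (zeta x - zeta a) - kappa a b * (a * zeta a).
Definition weight_defect (a b x : R) : R := b * zeta b * (x * zeta x) - weight a b x.

Section Weight.

Variables a b : R.
Hypotheses (Ha : 0 <= a) (Hab : a < b) (Hb : b < 1).

Lemma rhs_eq_c0 La Lb :
  2 + a * (rho_hat a + La) + b * (rho_hat b + Lb) = c0 a b + a * La + b * Lb.
Proof.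
  unfold rho_hat, c0.
  pose proof (zeta_mul_one_sub_sq a ltac:(lra)). pose proof (zeta_mul_one_sub_sq b ltac:(lra)).
  nra.
Qed.

Lemma two_le_c0 : 2 <= c0 a b.
Proof.
  unfold c0. pose proof (two_le_zeta a ltac:(lra)). pose proof (two_le_zeta b ltac:(lra)). lra.
Qed.

Lemma kappa_pos : 0 < kappa a b.
Proof.
  unfold kappa. pose proof (zeta_le a b Ha ltac:(lra) Hb). pose proof (two_le_zeta a ltac:(lra)).
  nra.
Qed.

Lemma weight_at_b : weight a b b = kappa a b * (b * zeta b).
Proof. unfold weight, c0, kappa, zeta. field. split; nra. Qed.

Lemma weight_at_b_nonneg : 0 <= weight a b b.
Proof.
  rewrite weight_at_b. pose proof kappa_pos. pose proof (two_le_zeta b ltac:(lra)).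
  apply Rmult_le_pos; [lra | apply Rmult_le_pos; lra].
Qed.

Lemma weight_le_weight_at_b x : a <= x <= b -> weight a b x <= weight a b b.
Proof.
  intros Hx. unfold weight. pose proof two_le_c0.
  pose proof (zeta_le x b ltac:(lra) ltac:(lra) Hb). nra.
Qed.

(* [(1 - x^2) weight_defect a b x] is a quadratic in [x] with leading coefficient [-alpha <= -4],
   nonnegative at [a] and at [b]. *)
Lemma weight_defect_lower_bound x : a <= x <= b ->
  4 * ((x - a) * (b - x)) <= (1 - x ^ 2) * weight_defect a b x.
Proof.
  intros Hx.
  set (alpha := c0 a b * zeta a + kappa a b * (a * zeta a)).
  set (q t := - alpha * t ^ 2 + 2 * (b * zeta b) * t + (alpha - 2 * c0 a b)).
  assert (Hq : forall t, -1 < t < 1 -> (1 - t ^ 2) * weight_defect a b t = q t).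
  { intros t Ht.
    assert (D : (1 - t ^ 2) * weight_defect a b t - q t
                = (zeta t * (1 - t ^ 2) - 2) * (b * zeta b * t - c0 a b))
      by (unfold q, alpha, weight_defect, weight; ring).
    rewrite zeta_mul_one_sub_sq in D by exact Ht. lra. }
  pose proof two_le_c0. pose proof kappa_pos.
  pose proof (two_le_zeta a ltac:(lra)). pose proof (two_le_zeta b ltac:(lra)).
  assert (0 <= a * zeta a) by (apply Rmult_le_pos; lra).
  assert (Hqa : 0 <= q a).
  { rewrite <- Hq by lra. apply Rmult_le_pos; [nra|].
    unfold weight_defect, weight. replace (zeta a - zeta a) with 0 by ring.
    assert (0 <= b * zeta b * (a * zeta a)) by (apply Rmult_le_pos; nra).
    assert (0 <= kappa a b * (a * zeta a)) by (apply Rmult_le_pos; lra).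
    lra. }
  assert (Hqb : 0 <= q b).
  { rewrite <- Hq by lra. apply Rmult_le_pos; [nra|].
    unfold weight_defect. rewrite weight_at_b. unfold kappa.
    replace (b * zeta b * (b * zeta b) - (b * zeta b - a * zeta a) * (b * zeta b))
      with (b * zeta b * (a * zeta a)) by ring.
    apply Rmult_le_pos; nra. }
  assert (Halpha : 4 <= alpha).
  { unfold alpha. assert (0 <= kappa a b * (a * zeta a)) by (apply Rmult_le_pos; lra). nra. }
  assert (E : (b - a) * (q x - alpha * ((x - a) * (b - x))) = q a * (b - x) + q b * (x - a))
    by (unfold q; ring).
  assert (0 <= q a * (b - x) + q b * (x - a))
    by (apply Rplus_le_le_0_compat; apply Rmult_le_pos; lra).
  assert (0 <= q x - alpha * ((x - a) * (b - x))).
  { apply (Rmult_le_reg_l (b - a)); [lra|]. rewrite Rmult_0_r, E. assumption. }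
  assert (0 <= (x - a) * (b - x)) by (apply Rmult_le_pos; lra).
  rewrite Hq by lra. nra.
Qed.

Lemma weight_defect_nonneg x : a <= x <= b -> 0 <= weight_defect a b x.
Proof.
  intros Hx. pose proof (weight_defect_lower_bound x Hx).
  assert (0 <= (x - a) * (b - x)) by (apply Rmult_le_pos; lra).
  assert (0 < 1 - x ^ 2) by nra. nra.
Qed.

End Weight.

(** * The nondecreasing function Phi *)

Lemma exp_sub_le u v : exp v - exp u <= exp v * (v - u).
Proof.
  pose proof (exp_ineq1_le (u - v)). pose proof (exp_pos v).
  replace (exp u) with (exp v * exp (u - v)) by (rewrite <- exp_plus; f_equal; ring).
  nra.
Qed.

Lemma psi_at_a rho a : psi rho a a = 1.
Proof. unfold psi, h_fun. rewrite RInt_diag. apply exp_0. Qed.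

Definition Phi (a b La Lb : R) (rho : R -> R) (x : R) : R :=
  (c0 a b + a * La + b * Lb) * RInt (f_fun rho a) a x - weight a b x * psi rho a x.

(* A lower bound for the formal derivative (a La + b Lb) f - weight rho psi of [Phi],
   using rho <= Lb zeta / zeta b where the weight is positive. *)
Definition Phi_slope (a b Lb : R) (rho : R -> R) (x : R) : R :=
  if Rle_dec (weight a b x) 0 then b * Lb * f_fun rho a x
  else Lb / zeta b * (zeta x * psi rho a x) * weight_defect a b x.

Section Density.

Variables (a b : R) (rho : R -> R) (Lb : R).
Hypotheses (Ha : 0 <= a) (Hab : a < b) (Hb : b < 1).
Hypothesis rho_nonneg : forall t, a <= t <= b -> 0 <= rho t.
Hypothesis rho_div_zeta_nondecr : nondecreasing_on (fun t => rho t / zeta t) a b.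
Hypothesis rho_left_lim : left_lim rho b Lb.

Lemma rho_nondecreasing : nondecreasing_on rho a b.
Proof.
  intros x y Hx Hxy Hy.
  pose proof (rho_div_zeta_nondecr x y Hx Hxy Hy) as Hq. cbv beta in Hq.
  pose proof (two_le_zeta x ltac:(lra)). pose proof (two_le_zeta y ltac:(lra)).
  pose proof (zeta_le x y ltac:(lra) Hxy ltac:(lra)). pose proof (rho_nonneg x ltac:(lra)).
  assert (0 <= rho x / zeta x) by (apply div_zeta_nonneg; lra).
  replace (rho x) with (rho x / zeta x * zeta x) by (field; lra).
  replace (rho y) with (rho y / zeta y * zeta y) by (field; lra).
  nra.
Qed.

Lemma rho_le_left_lim t : a <= t < b -> rho t * zeta b <= Lb * zeta t.
Proof.
  intros Ht. set (c := rho t / zeta t).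
  pose proof (two_le_zeta t ltac:(lra)).
  assert (Hc : c * zeta b <= Lb).
  { apply (left_lim_le (fun s => c * zeta s) rho b (c * zeta b) Lb (b - t));
      [lra | | | exact rho_left_lim].
    - intros s Hs. pose proof (two_le_zeta s ltac:(lra)).
      assert (c <= rho s / zeta s) by (apply rho_div_zeta_nondecr; lra).
      replace (rho s) with (rho s / zeta s * zeta s) by (field; lra). nra.
    - apply (left_lim_continuous (fun s => c * zeta s)).
      apply (continuity_pt_scal zeta). apply continuity_pt_zeta. lra. }
  replace (rho t) with (c * zeta t) by (unfold c; field; lra).
  pose proof (two_le_zeta t ltac:(lra)). nra.
Qed.

Lemma left_lim_nonneg : 0 <= Lb.
Proof.
  apply (left_lim_le (fun _ => 0) rho b 0 Lb (b - a)); [lra | | | exact rho_left_lim].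
  - intros t Ht. apply rho_nonneg. lra.
  - apply (left_lim_continuous (fun _ => 0)). apply continuity_pt_const. intros ? ?. reflexivity.
Qed.

Lemma h_fun_sub x y : a <= x -> x <= y -> y <= b -> h_fun rho a y - h_fun rho a x = RInt rho x y.
Proof.
  intros Hx Hxy Hy. unfold h_fun.
  rewrite (RInt_Chasles_nondecreasing rho a b rho_nondecreasing x y Hx Hxy Hy). ring.
Qed.

Lemma h_fun_sub_nonneg x y : a <= x -> x <= y -> y <= b -> 0 <= h_fun rho a y - h_fun rho a x.
Proof.
  intros Hx Hxy Hy. rewrite h_fun_sub by assumption.
  rewrite <- (Rmult_0_l (y - x)). apply RInt_ge_const; [exact Hxy | |].
  - exact (Riemann_integrable_nondecreasing_sub rho a b rho_nondecreasing x y Hx Hxy Hy).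
  - intros t Ht. apply rho_nonneg. lra.
Qed.

Lemma h_fun_sub_le x y : a <= x -> x <= y -> y <= b ->
  h_fun rho a y - h_fun rho a x <= Lb * zeta y / zeta b * (y - x).
Proof.
  intros Hx Hxy Hy. rewrite h_fun_sub by assumption.
  apply RInt_le_const; [exact Hxy | |].
  - exact (Riemann_integrable_nondecreasing_sub rho a b rho_nondecreasing x y Hx Hxy Hy).
  - intros t Ht. pose proof (rho_le_left_lim t ltac:(lra)).
    pose proof left_lim_nonneg. pose proof (two_le_zeta b ltac:(lra)).
    pose proof (zeta_le t y ltac:(lra) ltac:(lra) ltac:(lra)).
    apply (Rmult_le_reg_r (zeta b)); [lra|].
    replace (Lb * zeta y / zeta b * zeta b) with (Lb * zeta y) by (field; lra). nra.
Qed.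

Lemma psi_nondecreasing : nondecreasing_on (psi rho a) a b.
Proof.
  intros x y Hx Hxy Hy. unfold psi.
  pose proof (h_fun_sub_nonneg x y Hx Hxy Hy).
  pose proof (exp_sub_le (h_fun rho a y) (h_fun rho a x)). pose proof (exp_pos (h_fun rho a x)).
  nra.
Qed.

Lemma one_le_psi x : a <= x <= b -> 1 <= psi rho a x.
Proof. intros Hx. rewrite <- (psi_at_a rho a). apply psi_nondecreasing; lra. Qed.

Lemma psi_sub_le x y : a <= x -> x <= y -> y <= b ->
  psi rho a y - psi rho a x <= psi rho a y * (Lb * zeta y / zeta b * (y - x)).
Proof.
  intros Hx Hxy Hy. eapply Rle_trans; [apply exp_sub_le|].
  apply Rmult_le_compat_l; [left; apply exp_pos | exact (h_fun_sub_le x y Hx Hxy Hy)].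
Qed.

Lemma psi_sub_le_lipschitz x y : a <= x -> x <= y -> y <= b ->
  psi rho a y - psi rho a x <= psi rho a b * Lb * (y - x).
Proof.
  intros Hx Hxy Hy. eapply Rle_trans; [exact (psi_sub_le x y Hx Hxy Hy)|].
  pose proof left_lim_nonneg. pose proof (two_le_zeta b ltac:(lra)).
  pose proof (zeta_le y b ltac:(lra) Hy Hb). pose proof (two_le_zeta y ltac:(lra)).
  pose proof (one_le_psi y ltac:(lra)). pose proof (psi_nondecreasing y b ltac:(lra) Hy ltac:(lra)).
  assert (Lb * zeta y / zeta b <= Lb).
  { apply (Rmult_le_reg_r (zeta b)); [lra|].
    replace (Lb * zeta y / zeta b * zeta b) with (Lb * zeta y) by (field; lra). nra. }
  assert (0 <= Lb * zeta y / zeta b) by (apply div_zeta_nonneg; [lra | apply Rmult_le_pos; lra]).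
  rewrite Rmult_assoc. apply Rmult_le_compat; nra.
Qed.

Lemma f_fun_nondecreasing : nondecreasing_on (f_fun rho a) a b.
Proof.
  intros x y Hx Hxy Hy. unfold f_fun.
  pose proof (psi_nondecreasing x y Hx Hxy Hy). pose proof (one_le_psi x ltac:(lra)).
  pose proof (two_le_zeta x ltac:(lra)). pose proof (zeta_le x y ltac:(lra) Hxy ltac:(lra)).
  apply Rmult_le_compat; try lra.
  - apply Rmult_le_pos; [lra | apply pow2_ge_0].
  - apply Rmult_le_compat; [lra | apply pow2_ge_0 | lra | apply pow_incr; lra].
Qed.

Lemma f_fun_integral_pos : 0 < RInt (f_fun rho a) a b.
Proof.
  set (m := (a + b) / 2).
  rewrite (RInt_Chasles_nondecreasing _ a b f_fun_nondecreasing m b) by (unfold m; lra).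
  pose proof (RInt_ge_left_value _ a b f_fun_nondecreasing m b) as Hright.
  pose proof (RInt_ge_left_value _ a b f_fun_nondecreasing a m) as Hleft.
  specialize (Hright ltac:(unfold m; lra) ltac:(unfold m; lra) ltac:(lra)).
  specialize (Hleft ltac:(lra) ltac:(unfold m; lra) ltac:(unfold m; lra)).
  rewrite (RInt_Chasles_nondecreasing _ a b f_fun_nondecreasing a m) by (unfold m; lra).
  rewrite RInt_diag.
  assert (0 <= f_fun rho a a).
  { unfold f_fun. rewrite psi_at_a.
    apply Rmult_le_pos; [apply Rmult_le_pos; [lra | apply pow2_ge_0] | lra]. }
  assert (0 < f_fun rho a m).
  { unfold f_fun. pose proof (one_le_psi m ltac:(unfold m; lra)).
    pose proof (two_le_zeta m ltac:(unfold m; lra)).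
    apply Rmult_lt_0_compat; [apply Rmult_lt_0_compat; [unfold m; lra | nra] | lra]. }
  unfold m in *. nra.
Qed.


Lemma Phi_b_sub_Phi_a La :
  Phi a b La Lb rho b - Phi a b La Lb rho a
  = (c0 a b + a * La + b * Lb) * RInt (f_fun rho a) a b
    - kappa a b * (g_fun rho a a + g_fun rho a b).
Proof.
  unfold Phi, g_fun. rewrite RInt_diag, psi_at_a, weight_at_b by assumption.
  unfold weight. ring.
Qed.

Lemma zeta_sub_mul_psi_le x y : a <= x -> x <= y -> y <= b ->
  (zeta y - zeta x) * psi rho a y
  <= f_fun rho a x * (y - x) + (zeta b ^ 3 + zeta b ^ 2 * Lb) * psi rho a b * (y - x) ^ 2.
Proof.
  intros Hx Hxy Hy. unfold f_fun.
  pose proof (zeta_sub_le_tangent x y b ltac:(lra) Hxy Hy Hb).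
  pose proof (zeta_sub_le_lipschitz x y b ltac:(lra) Hxy Hy Hb).
  pose proof (zeta_le x y ltac:(lra) Hxy ltac:(lra)).
  pose proof (psi_sub_le_lipschitz x y Hx Hxy Hy).
  pose proof (psi_nondecreasing x y Hx Hxy Hy). pose proof (one_le_psi x ltac:(lra)).
  pose proof (psi_nondecreasing x b Hx ltac:(lra) ltac:(lra)).
  pose proof left_lim_nonneg. pose proof (two_le_zeta b ltac:(lra)).
  assert (0 <= zeta b ^ 3 * (y - x) ^ 2)
    by (apply Rmult_le_pos; [apply pow_le | apply pow2_ge_0]; lra).
  assert (A : (zeta y - zeta x) * psi rho a x
              <= x * zeta x ^ 2 * psi rho a x * (y - x) + zeta b ^ 3 * psi rho a b * (y - x) ^ 2).
  { apply Rle_trans with (psi rho a x * (x * zeta x ^ 2 * (y - x) + zeta b ^ 3 * (y - x) ^ 2)).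
    - rewrite Rmult_comm. apply Rmult_le_compat_l; lra.
    - nra. }
  assert (B : (zeta y - zeta x) * (psi rho a y - psi rho a x)
              <= zeta b ^ 2 * (y - x) * (psi rho a b * Lb * (y - x)))
    by (apply Rmult_le_compat; nra).
  nra.
Qed.

Lemma zeta_psi_sub_le x y : a <= x -> x <= y -> y <= b ->
  zeta y * psi rho a y - zeta x * psi rho a x
  <= (zeta b ^ 2 + zeta b * Lb) * psi rho a b * (y - x).
Proof.
  intros Hx Hxy Hy.
  pose proof (zeta_sub_le_lipschitz x y b ltac:(lra) Hxy Hy Hb).
  pose proof (zeta_le x y ltac:(lra) Hxy ltac:(lra)).
  pose proof (zeta_le x b ltac:(lra) ltac:(lra) Hb).
  pose proof (two_le_zeta x ltac:(lra)).
  pose proof (psi_sub_le_lipschitz x y Hx Hxy Hy).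
  pose proof (psi_nondecreasing x y Hx Hxy Hy).
  pose proof (psi_nondecreasing y b ltac:(lra) Hy ltac:(lra)).
  pose proof (one_le_psi y ltac:(lra)).
  assert ((zeta y - zeta x) * psi rho a y <= zeta b ^ 2 * (y - x) * psi rho a b)
    by (apply Rmult_le_compat; nra).
  assert (zeta x * (psi rho a y - psi rho a x) <= zeta b * (psi rho a b * Lb * (y - x)))
    by (apply Rmult_le_compat; lra).
  nra.
Qed.

Variable La : R.
Hypothesis rho_right_lim : right_lim rho a La.

Lemma right_lim_nonneg : 0 <= La.
Proof.
  apply (right_lim_le (fun _ => 0) rho a 0 La (b - a)); [lra | | | exact rho_right_lim].
  - intros t Ht. apply rho_nonneg. lra.
  - apply (right_lim_continuous (fun _ => 0)). apply continuity_pt_const. intros ? ?. reflexivity.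
Qed.

Lemma Phi_sub_ge x y : a <= x -> x <= y -> y <= b ->
  c0 a b * (f_fun rho a x * (y - x) - (zeta y - zeta x) * psi rho a y)
  + b * Lb * (f_fun rho a x * (y - x)) - weight a b x * (psi rho a y - psi rho a x)
  <= Phi a b La Lb rho y - Phi a b La Lb rho x.
Proof.
  intros Hx Hxy Hy. unfold Phi.
  rewrite (RInt_Chasles_nondecreasing _ a b f_fun_nondecreasing x y Hx Hxy Hy).
  pose proof (RInt_ge_left_value _ a b f_fun_nondecreasing x y Hx Hxy Hy).
  pose proof right_lim_nonneg. pose proof left_lim_nonneg. pose proof (two_le_c0 a b Ha Hab Hb).
  assert (0 <= f_fun rho a x * (y - x)).
  { apply Rmult_le_pos; [|lra]. unfold f_fun. pose proof (one_le_psi x ltac:(lra)).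
    apply Rmult_le_pos; [apply Rmult_le_pos; [lra | apply pow2_ge_0] | lra]. }
  assert (Hw : weight a b y = weight a b x + c0 a b * (zeta y - zeta x)) by (unfold weight; ring).
  rewrite Hw.
  assert (0 <= a * La) by (apply Rmult_le_pos; lra).
  assert (0 <= b * Lb) by (apply Rmult_le_pos; lra).
  assert ((c0 a b + b * Lb) * (f_fun rho a x * (y - x))
          <= (c0 a b + a * La + b * Lb) * RInt (f_fun rho a) x y)
    by (apply Rmult_le_compat; lra).
  nra.
Qed.

Lemma weight_mul_psi_sub_le x y : a <= x -> x <= y -> y <= b -> 0 < weight a b x ->
  weight a b x * (psi rho a y - psi rho a x)
  <= Lb / zeta b * weight a b x * (zeta x * psi rho a x) * (y - x)
     + Lb * weight a b b * ((zeta b ^ 2 + zeta b * Lb) * psi rho a b) * (y - x) ^ 2.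
Proof.
  intros Hx Hxy Hy Hw. set (r := Lb / zeta b * weight a b x).
  pose proof left_lim_nonneg. pose proof (two_le_zeta b ltac:(lra)).
  pose proof (two_le_zeta x ltac:(lra)). pose proof (zeta_le x y ltac:(lra) Hxy ltac:(lra)).
  pose proof (psi_nondecreasing x y Hx Hxy Hy). pose proof (one_le_psi x ltac:(lra)).
  assert (Hr : 0 <= r <= Lb * weight a b b).
  { pose proof (weight_le_weight_at_b a b Ha Hab Hb x ltac:(lra)).
    split; [apply Rmult_le_pos; [apply div_zeta_nonneg|]; lra |].
    apply (Rmult_le_reg_r (zeta b)); [lra|].
    replace (r * zeta b) with (Lb * weight a b x) by (unfold r; field; lra).
    assert (Lb * weight a b x <= Lb * weight a b b) by (apply Rmult_le_compat_l; lra).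
    assert (0 <= Lb * weight a b b) by (apply Rmult_le_pos; lra).
    nra. }
  assert (Hweight_psi : weight a b x * (psi rho a y - psi rho a x)
                       <= r * (zeta y * psi rho a y) * (y - x)).
  { eapply Rle_trans; [apply Rmult_le_compat_l; [lra | exact (psi_sub_le x y Hx Hxy Hy)] |].
    right. unfold r. field. lra. }
  assert (r * (zeta y * psi rho a y - zeta x * psi rho a x) * (y - x)
          <= Lb * weight a b b * ((zeta b ^ 2 + zeta b * Lb) * psi rho a b * (y - x)) * (y - x)).
  { apply Rmult_le_compat_r; [lra|].
    apply Rmult_le_compat; [lra | nra | lra | exact (zeta_psi_sub_le x y Hx Hxy Hy)]. }
  nra.
Qed.

Lemma Phi_local_slope : exists L, forall x y, a <= x -> x <= y -> y <= b ->
  Phi_slope a b Lb rho x * (y - x) - L * (y - x) ^ 2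
  <= Phi a b La Lb rho y - Phi a b La Lb rho x.
Proof.
  set (E1 := (zeta b ^ 3 + zeta b ^ 2 * Lb) * psi rho a b).
  set (E2 := (zeta b ^ 2 + zeta b * Lb) * psi rho a b).
  exists (c0 a b * E1 + Lb * weight a b b * E2). intros x y Hx Hxy Hy.
  pose proof (Phi_sub_ge x y Hx Hxy Hy).
  pose proof (zeta_sub_mul_psi_le x y Hx Hxy Hy) as HE1. fold E1 in HE1.
  pose proof (two_le_c0 a b Ha Hab Hb). pose proof left_lim_nonneg.
  pose proof (weight_at_b_nonneg a b Ha Hab Hb).
  pose proof (psi_nondecreasing x y Hx Hxy Hy).
  assert (0 <= E2).
  { unfold E2. pose proof (two_le_zeta b ltac:(lra)). pose proof (one_le_psi b ltac:(lra)).
    apply Rmult_le_pos; [|lra].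
    apply Rplus_le_le_0_compat; [apply pow2_ge_0 | apply Rmult_le_pos; lra]. }
  assert (0 <= Lb * weight a b b * E2 * (y - x) ^ 2)
    by (apply Rmult_le_pos; [apply Rmult_le_pos; [apply Rmult_le_pos |] | apply pow2_ge_0]; lra).
  assert (c0 a b * (- E1 * (y - x) ^ 2)
          <= c0 a b * (f_fun rho a x * (y - x) - (zeta y - zeta x) * psi rho a y))
    by (apply Rmult_le_compat_l; lra).
  unfold Phi_slope. destruct (Rle_dec (weight a b x) 0) as [Hw | Hw].
  - assert (weight a b x * (psi rho a y - psi rho a x) <= 0) by nra.
    nra.
  - apply Rnot_le_lt in Hw.
    pose proof (weight_mul_psi_sub_le x y Hx Hxy Hy Hw) as HW. fold E2 in HW.
    assert (Lb / zeta b * (zeta x * psi rho a x) * weight_defect a b x * (y - x)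
            = b * Lb * (f_fun rho a x * (y - x))
              - Lb / zeta b * weight a b x * (zeta x * psi rho a x) * (y - x)).
    { pose proof (two_le_zeta b ltac:(lra)). unfold weight_defect, f_fun. field. lra. }
    nra.
Qed.

Lemma Phi_slope_nonneg x : a <= x <= b -> 0 <= Phi_slope a b Lb rho x.
Proof.
  intros Hx. pose proof left_lim_nonneg. pose proof (one_le_psi x Hx).
  pose proof (two_le_zeta x ltac:(lra)).
  unfold Phi_slope, f_fun. destruct (Rle_dec (weight a b x) 0).
  - apply Rmult_le_pos; [apply Rmult_le_pos; lra |].
    apply Rmult_le_pos; [apply Rmult_le_pos; [lra | apply pow2_ge_0] | lra].
  - apply Rmult_le_pos; [| apply (weight_defect_nonneg a b Ha Hab Hb); lra].
    apply Rmult_le_pos; [apply div_zeta_nonneg | apply Rmult_le_pos]; lra.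
Qed.

Lemma Phi_slope_pos_middle : 0 < Lb -> exists mu, 0 < mu /\
  forall x, a + (b - a) / 3 <= x <= b - (b - a) / 3 -> mu <= Phi_slope a b Lb rho x.
Proof.
  intros HLb. pose proof (two_le_zeta b ltac:(lra)).
  exists (Lb * Rmin (b * (4 * (a + (b - a) / 3))) (8 * ((b - a) ^ 2 / 9) / zeta b)).
  split.
  { apply Rmult_lt_0_compat; [exact HLb|]. apply Rmin_pos; [nra|].
    apply Rdiv_lt_0_compat; [nra | lra]. }
  intros x Hx. pose proof (one_le_psi x ltac:(lra)). pose proof (two_le_zeta x ltac:(lra)).
  unfold Phi_slope, f_fun. destruct (Rle_dec (weight a b x) 0).
  - apply Rle_trans with (Lb * (b * (4 * (a + (b - a) / 3)))).
    { apply Rmult_le_compat_l; [lra | apply Rmin_l]. }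
    replace (b * Lb * (x * zeta x ^ 2 * psi rho a x))
      with (Lb * (b * (x * zeta x ^ 2 * psi rho a x))) by ring.
    apply Rmult_le_compat_l; [lra|]. apply Rmult_le_compat_l; [lra|].
    assert (4 <= zeta x ^ 2) by nra.
    assert (4 * x <= x * zeta x ^ 2) by nra.
    assert (x * zeta x ^ 2 <= x * zeta x ^ 2 * psi rho a x) by nra.
    lra.
  - pose proof (weight_defect_lower_bound a b Ha Hab Hb x ltac:(lra)).
    pose proof (weight_defect_nonneg a b Ha Hab Hb x ltac:(lra)).
    assert (Hdefect : 4 * ((b - a) ^ 2 / 9) <= weight_defect a b x) by nra.
    apply Rle_trans with (Lb / zeta b * 2 * (4 * ((b - a) ^ 2 / 9))).
    { replace (Lb / zeta b * 2 * (4 * ((b - a) ^ 2 / 9)))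
        with (Lb * (8 * ((b - a) ^ 2 / 9) / zeta b)) by (field; lra).
      apply Rmult_le_compat_l; [lra | apply Rmin_r]. }
    apply Rmult_le_compat; [| nra | | exact Hdefect].
    + apply Rmult_le_pos; [apply div_zeta_nonneg|]; lra.
    + apply Rmult_le_compat_l; [apply div_zeta_nonneg; lra | nra].
Qed.

Lemma Phi_increment_ge_slope_bound mu x y : a <= x -> x <= y -> y <= b ->
  (forall t, x <= t <= y -> mu <= Phi_slope a b Lb rho t) ->
  mu * (y - x) <= Phi a b La Lb rho y - Phi a b La Lb rho x.
Proof.
  intros Hx Hxy Hy Hmu. destruct Phi_local_slope as [L HL].
  apply (increment_ge_of_local_bound (Phi a b La Lb rho) x y mu L); [|exact Hxy].
  intros u v Hu Huv Hv. specialize (HL u v ltac:(lra) Huv ltac:(lra)).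
  assert (mu * (v - u) <= Phi_slope a b Lb rho u * (v - u))
    by (apply Rmult_le_compat_r; [lra | apply Hmu; lra]).
  lra.
Qed.

Lemma Phi_nondecreasing : nondecreasing_on (Phi a b La Lb rho) a b.
Proof.
  intros x y Hx Hxy Hy.
  pose proof (Phi_increment_ge_slope_bound 0 x y Hx Hxy Hy
                (fun t Ht => Phi_slope_nonneg t ltac:(lra))).
  lra.
Qed.

Lemma Phi_a_lt_Phi_b : 0 < Lb -> Phi a b La Lb rho a < Phi a b La Lb rho b.
Proof.
  intros HLb. destruct (Phi_slope_pos_middle HLb) as [mu [Hmu Hslope]].
  set (c := a + (b - a) / 3). set (d := b - (b - a) / 3).
  pose proof (Phi_nondecreasing a c ltac:(lra) ltac:(unfold c; lra) ltac:(unfold c; lra)).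
  pose proof (Phi_nondecreasing d b ltac:(unfold d; lra) ltac:(unfold d; lra) ltac:(lra)).
  pose proof (Phi_increment_ge_slope_bound mu c d ltac:(unfold c; lra) ltac:(unfold c, d; lra)
                ltac:(unfold d; lra) Hslope).
  assert (0 < mu * (d - c)) by (apply Rmult_lt_0_compat; unfold c, d; lra).
  lra.
Qed.

Lemma kappa_mul_m_hat_le :
  kappa a b * m_hat rho a b <= c0 a b + a * La + b * Lb.
Proof.
  pose proof f_fun_integral_pos. pose proof Phi_b_sub_Phi_a La.
  pose proof (Phi_nondecreasing a b ltac:(lra) ltac:(lra) ltac:(lra)).
  unfold m_hat. apply (Rmult_le_reg_r (RInt (f_fun rho a) a b)); [lra|].
  field_simplify; lra.
Qed.

Lemma kappa_mul_m_hat_lt : 0 < Lb ->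
  kappa a b * m_hat rho a b < c0 a b + a * La + b * Lb.
Proof.
  intros HLb. pose proof f_fun_integral_pos. pose proof Phi_b_sub_Phi_a La.
  pose proof (Phi_a_lt_Phi_b HLb).
  unfold m_hat. apply (Rmult_lt_reg_r (RInt (f_fun rho a) a b)); [lra|].
  field_simplify; lra.
Qed.

Lemma left_lim_pos t : a <= t < b -> rho t <> 0 -> 0 < Lb.
Proof.
  intros Ht Hne. pose proof (rho_le_left_lim t Ht). pose proof (rho_nonneg t ltac:(lra)).
  pose proof (two_le_zeta t ltac:(lra)). pose proof (two_le_zeta b ltac:(lra)).
  assert (0 < rho t * zeta b) by (apply Rmult_lt_0_compat; lra).
  nra.
Qed.

Section VanishingDensity.

Hypothesis rho_zero : forall t, a <= t < b -> rho t = 0.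

Lemma right_lim_eq_0 : La = 0.
Proof.
  apply Rle_antisym; [|exact right_lim_nonneg].
  apply (right_lim_le rho (fun _ => 0) a La 0 (b - a)); [lra | | exact rho_right_lim |].
  - intros t Ht. rewrite rho_zero by lra. lra.
  - apply (right_lim_continuous (fun _ => 0)). apply continuity_pt_const. intros ? ?. reflexivity.
Qed.

Lemma left_lim_eq_0 : Lb = 0.
Proof.
  apply Rle_antisym; [|exact left_lim_nonneg].
  apply (left_lim_le rho (fun _ => 0) b Lb 0 (b - a)); [lra | | exact rho_left_lim |].
  - intros t Ht. rewrite rho_zero by lra. lra.
  - apply (left_lim_continuous (fun _ => 0)). apply continuity_pt_const. intros ? ?. reflexivity.
Qed.

Lemma psi_eq_1 x : a <= x <= b -> psi rho a x = 1.
Proof.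
  intros Hx. unfold psi. rewrite <- exp_0. f_equal.
  replace (h_fun rho a x) with (h_fun rho a x - h_fun rho a a)
    by (unfold h_fun; rewrite RInt_diag; ring).
  rewrite h_fun_sub by lra.
  pose proof (Riemann_integrable_nondecreasing_sub rho a b rho_nondecreasing a x
                ltac:(lra) ltac:(lra) ltac:(lra)).
  apply Rle_antisym.
  - rewrite <- (Rmult_0_l (x - a)). apply RInt_le_const; [lra | assumption |].
    intros t Ht. rewrite rho_zero by lra. lra.
  - rewrite <- (Rmult_0_l (x - a)). apply RInt_ge_const; [lra | assumption |].
    intros t Ht. rewrite rho_zero by lra. lra.
Qed.

Lemma f_fun_integral_eq : RInt (f_fun rho a) a b = zeta b - zeta a.
Proof.
  rewrite (RInt_RiemannInt _ a b
             (Riemann_integrable_nondecreasing _ a b ltac:(lra) f_fun_nondecreasing)).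
  apply ZetaPrimitive.RiemannInt_zeta_derivative; try lra.
  intros x Hx. unfold f_fun. rewrite psi_eq_1 by lra. ring.
Qed.

Lemma kappa_mul_m_hat_eq : kappa a b * m_hat rho a b = c0 a b.
Proof.
  pose proof f_fun_integral_pos. rewrite f_fun_integral_eq in *.
  assert (Hk : kappa a b * (a * zeta a + b * zeta b) = c0 a b * (zeta b - zeta a)).
  { pose proof (weight_at_b a b Ha Hab Hb). unfold weight in *. lra. }
  unfold m_hat, g_fun. rewrite f_fun_integral_eq, !psi_eq_1 by lra.
  rewrite !Rmult_1_r. unfold Rdiv. rewrite <- Rmult_assoc, Hk. field. lra.
Qed.

End VanishingDensity.

End Density.


Theorem mainTheorem10 (a b : R) (rho : R -> R) (La Lb : R) :
  0 <= a -> a < b -> b < 1 ->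
  (forall t, a <= t <= b -> 0 <= rho t) ->
  (forall s t, a <= s -> s <= t -> t <= b -> rho s / zeta s <= rho t / zeta t) ->
  (exists M, forall t, a <= t <= b -> Rabs (rho t / zeta t) <= M) ->
  right_lim rho a La ->
  left_lim rho b Lb ->
  ((b * zeta b - a * zeta a) * m_hat rho a b
     <= 2 + a * (rho_hat a + La) + b * (rho_hat b + Lb))
  /\
  ((b * zeta b - a * zeta a) * m_hat rho a b
     = 2 + a * (rho_hat a + La) + b * (rho_hat b + Lb)
   <-> (forall t, a <= t < b -> rho t = 0)).
Proof.
  intros Ha Hab Hb Hnonneg Hmono _ HLa HLb.
  rewrite (rhs_eq_c0 a b Ha Hab Hb).
  change (b * zeta b - a * zeta a) with (kappa a b).
  pose proof (kappa_mul_m_hat_le a b rho Lb Ha Hab Hb Hnonneg Hmono HLb La HLa) as Hle.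
  split; [exact Hle | split].
  - intros Heq t Ht. destruct (Req_dec (rho t) 0) as [Hzero | Hne]; [exact Hzero|].
    pose proof (kappa_mul_m_hat_lt a b rho Lb Ha Hab Hb Hnonneg Hmono HLb La HLa
                  (left_lim_pos a b rho Lb Ha Hab Hb Hnonneg Hmono HLb t Ht Hne)).
    lra.
  - intros Hzero.
    rewrite (right_lim_eq_0 a b rho Hab Hnonneg La HLa Hzero),
            (left_lim_eq_0 a b rho Lb Hab Hnonneg HLb Hzero),
            (kappa_mul_m_hat_eq a b rho Ha Hab Hb Hnonneg Hmono Hzero).
    ring.
Qed.
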